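(* Let $(X,d)$ be an $F$-space with non-decreasing metric $d$, and let $\{X_n\}$ be a nontrivial linear approximation scheme on $X$ with $\dim X_n<\infty$ for all $n$. Writing $\|x\|=d(x,0)$, if $$R_{\|\cdot\|}\Big(\bigcup_n X_n\Big)>0,$$ then $\inf_n E(X,X_n)>0$ and $\{X_n\}$ satisfies Shapiro's theorem on $X$.
   Context: An $F$-space is a complete metric vector space with translation-invariant metric $d$. The metric is non-decreasing if $d(\alpha x,0)\le d(x,0)$ for $0\le\alpha\le1$. A nontrivial linear approximation scheme is a chain $X_0\subsetneq X_1\subsetneq\cdots\subsetneq X$ of linear subspaces (strict inclusions) with $\bigcup_nX_n$ dense in $X$. For a linear subspace $V\subseteq X$, its radius is $R_{\|\cdot\|}(V)=\inf_{v\in V\setminus\{0\}}\sup_{t>0}\|tv\|$ (possibly $+\infty$). $E(x,A)=\inf_{a\in A}d(x,a)$ and $E(X,A)=\sup_{x\in X}E(x,A)$. $\{X_n\}$ satisfies Shapiro's theorem on $X$ if for every non-increasing sequence $\{\varepsilon_n\}$ of nonnegative reals tending to $0$ there exists $x\in X$ with $E(x,X_n)\neq\mathbf{O}(\varepsilon_n)$. *)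

From HB Require Import structures.
From mathcomp Require Import all_boot all_order all_algebra.
From mathcomp Require Import all_classical all_reals ereal.
Set Implicit Arguments. Unset Strict Implicit. Unset Printing Implicit Defensive.
Import Order.TTheory GRing.Theory Num.Theory.
Local Open Scope classical_set_scope.
Local Open Scope ring_scope.

Section Defs.
Variables (R : realType) (V : lmodType R).

Definition is_metric (d : V -> V -> R) : Prop :=
  [/\ forall x y, 0 <= d x y,
      forall x y, d x y = 0 <-> x = y,
      forall x y, d x y = d y x &
      forall x y z, d x z <= d x y + d y z].

Definition translation_invariant (d : V -> V -> R) : Prop :=
  forall x y z, d (x + z) (y + z) = d x y.

Definition dconv (d : V -> V -> R) (u : nat -> V) (x : V) : Prop :=
  forall e : R, 0 < e -> exists N : nat, forall n, (N <= n)%N -> d (u n) x < e.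

Definition dcauchy (d : V -> V -> R) (u : nat -> V) : Prop :=
  forall e : R, 0 < e -> exists N : nat, forall m n, (N <= m)%N -> (N <= n)%N ->
    d (u m) (u n) < e.

Definition rconv (a : nat -> R) (l : R) : Prop :=
  forall e : R, 0 < e -> exists N : nat, forall n, (N <= n)%N -> `|a n - l| < e.

(* Addition is continuous as a
   consequence of translation invariance; continuity of scalar
   multiplication (jointly) is required explicitly. *)
Definition Fspace (d : V -> V -> R) : Prop :=
  [/\ is_metric d, translation_invariant d,
      (forall (a : nat -> R) (u : nat -> V) (l : R) (x : V),
          rconv a l -> dconv d u x -> dconv d (fun n => a n *: u n) (l *: x)) &
      (forall u : nat -> V, dcauchy d u -> exists x, dconv d u x)].

Definition nondecreasing_metric (d : V -> V -> R) : Prop :=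
  forall (x : V) (a : R), 0 <= a <= 1 -> d (a *: x) 0 <= d x 0.

Definition linear_subspace (S : set V) : Prop :=
  [/\ S 0, forall x y, S x -> S y -> S (x + y) &
      forall (a : R) x, S x -> S (a *: x)].

Definition finite_dimensional (S : set V) : Prop :=
  exists (n : nat) (v : 'I_n -> V),
    forall x, S x <-> exists c : 'I_n -> R, x = \sum_(i < n) c i *: v i.

Definition approx_scheme (d : V -> V -> R) (Xs : nat -> set V) : Prop :=
  [/\ forall n, linear_subspace (Xs n),
      forall n, Xs n `<` Xs n.+1 &
      forall (x : V) (e : R), 0 < e -> exists n y, Xs n y /\ d x y < e].

Definition bigUnion (Xs : nat -> set V) : set V := \bigcup_n Xs n.

Definition radius (d : V -> V -> R) (S : set V) : \bar R :=
  ereal_inf [set ereal_sup [set (d (t *: v) 0)%:E | t in [set t : R | 0 < t]]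
            | v in [set v | S v /\ v <> 0]].

Definition Edist (d : V -> V -> R) (x : V) (A : set V) : \bar R :=
  ereal_inf [set (d x a)%:E | a in A].

Definition EX (d : V -> V -> R) (A : set V) : \bar R :=
  ereal_sup [set Edist d x A | x in [set: V]].

Definition satisfies_Shapiro (d : V -> V -> R) (Xs : nat -> set V) : Prop :=
  forall eps : nat -> R,
    (forall n, 0 <= eps n) ->
    (forall n, eps n.+1 <= eps n) ->
    rconv eps 0 ->
    exists x : V, ~ (exists (C : R) (N : nat), forall n, (N <= n)%N ->
                       (Edist d x (Xs n) <= (C * eps n)%:E)%E).

End Defs.

From HB Require Import structures.
From mathcomp Require Import all_boot all_order all_algebra.
From mathcomp Require Import all_classical all_reals ereal.
From mathcomp Require Import topology normedtype sequences.
From mathcomp Require Import ring lra.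
Import Order.TTheory GRing.Theory Num.Theory numFieldNormedType.Exports.
Set Implicit Arguments. Unset Strict Implicit. Unset Printing Implicit Defensive.
Local Open Scope classical_set_scope.
Local Open Scope ring_scope.

(* Write |x| for d x 0 and fix eta > 0 below the radius of the union, so that
   every nonzero u in some X_n has a multiple of norm > eta.  By compactness of
   the l1 sphere of coefficients in the finite-dimensional space X_n + R v, for
   v in X_{n+1} \ X_n some multiple T v stays at distance >= eta from X_n;
   walking along the multiples of v in steps of small norm then gives, for every
   0 < th < eta, some y in X_{n+1} with |y| <= 2 th and dist(y, X_n) >= th.  This
   bounds every E(X, X_n) below by eta / 2.  For Shapiro's theorem, add such
   elements with th_j = (eta / 2) 8^-j along a sparse sequence of indices n_j:
   the series converges by completeness, its sum x has dist(x, X_{n_j}) >=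
   th_j / 2, and choosing n_j with eps_{n_j} < th_j / (2 (j + 1)) rules out
   E(x, X_n) = O(eps_n). *)

Section FNorm.
Variables (R : realType) (V : lmodType R) (d : V -> V -> R).
Hypotheses (dm : is_metric d) (dti : translation_invariant d).

Lemma dist_subr x y : d x y = d (x - y) 0.
Proof. by rewrite -(dti (x - y) 0 y) subrK add0r. Qed.

Lemma fnormN x : d (- x) 0 = d x 0.
Proof. by case: dm => _ _ dC _; rewrite -(dti (- x) 0 x) addNr add0r dC. Qed.

Lemma fnormD x y : d (x + y) 0 <= d x 0 + d y 0.
Proof.
case: dm => _ _ _ dtri; apply: le_trans (dtri _ y _) _.
by rewrite -{2}(add0r y) dti.
Qed.

Lemma fnorm_sum K (F : nat -> V) :
  d (\sum_(i < K) F i) 0 <= \sum_(i < K) d (F i) 0.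
Proof.
elim: K => [|K IH]; first by case: dm => _ d0 _ _; rewrite !big_ord0 (proj2 (d0 0 0)).
by rewrite !big_ord_recr /=; apply: le_trans (fnormD _ _) _; rewrite lerD2r.
Qed.

Hypothesis dnd : nondecreasing_metric d.

Lemma fnormZ_le (a b : R) x : `|a| <= `|b| -> d (a *: x) 0 <= d (b *: x) 0.
Proof.
move=> ab; have [b0|b0] := eqVneq b 0.
  by move: ab; rewrite b0 normr0 normr_le0 => /eqP ->.
have -> : a *: x = (a / b) *: (b *: x) by rewrite scalerA divfK.
have ab1 : `|a / b| <= 1 by rewrite normrM normfV ler_pdivrMr ?normr_gt0 // mul1r.
have [ab0|ab0] := leP 0 (a / b).
  by apply: dnd; rewrite ab0 -(ger0_norm ab0).
rewrite -fnormN -scaleNr; apply: dnd.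
by rewrite oppr_ge0 ltW //= -(ltr0_norm ab0).
Qed.

Lemma far_multiple_ge (S : set V) v T t eta :
  linear_subspace S -> 0 < T <= t ->
  (forall a, S a -> eta <= d (T *: v) a) -> forall a, S a -> eta <= d (t *: v) a.
Proof.
move=> [_ _ SZ] /andP[T0 Tt] farT a Sa.
pose be := t / T.
have be1 : 1 <= be by rewrite ler_pdivlMr // mul1r.
have be0 : be != 0 by rewrite gt_eqF // (lt_le_trans ltr01 be1).
rewrite dist_subr (_ : t *: v - a = be *: (T *: v - be^-1 *: a)); last first.
  by rewrite scalerBr !scalerA mulfV // scale1r divfK ?gt_eqF.
apply: le_trans (fnormZ_le (a := 1) (b := be) _ _); last first.
  by rewrite normr1 ger0_norm // (le_trans ler01 be1).
by rewrite scale1r -dist_subr; apply/farT/SZ.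
Qed.

End FNorm.

Lemma increasing_geq_id (g : nat -> nat) :
  (forall m, (g m < g m.+1)%N) -> forall m, (m <= g m)%N.
Proof. by move=> gS; elim=> [//|m IH]; apply: leq_ltn_trans IH (gS m). Qed.

Lemma eventually_forall_ltn (P : nat -> nat -> Prop) K :
  (forall j, (j < K)%N -> exists N, forall m, (N <= m)%N -> P j m) ->
  exists N, forall m, (N <= m)%N -> forall j, (j < K)%N -> P j m.
Proof.
elim: K => [|K IH] evP; first by exists 0%N.
have [N1 HN1] := IH (fun j jK => evP j (ltnW jK)).
have [N2 HN2] := evP K (ltnSn K).
exists (maxn N1 N2) => m; rewrite geq_max => /andP[m1 m2] j.
by rewrite ltnS leq_eqVlt => /orP[/eqP ->|jK]; [apply: HN2 | apply: HN1].
Qed.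

Lemma exists_increasing_above (N : nat -> nat) :
  exists mm : nat -> nat, (forall j, (mm j < mm j.+1)%N) /\ forall j, (N j <= mm j)%N.
Proof.
exists (fun j => j + \sum_(i < j.+1) N i)%N; split=> j.
  by rewrite [in X in (_ < X)%N]big_ord_recr /= addSn ltnS leq_add2l leq_addr.
by rewrite big_ord_recr /= addnA leq_addl.
Qed.

Lemma nat_switch (P : nat -> Prop) J : ~ P 0%N -> P J -> exists j, ~ P j /\ P j.+1.
Proof.
elim: J => [//|J IH] P0 PJ1.
by have [PJ|nPJ] := EM (P J); [apply: IH | exists J].
Qed.

Section RealSequences.
Variable R : realType.

Lemma rconv_harmonic : rconv (fun m : nat => (m.+1%:R : R)^-1) 0.
Proof.
move=> e e0; exists (Num.truncn e^-1) => n Nn.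
rewrite subr0 ger0_norm ?invr_ge0 ?ler0n // -[e]invrK ltf_pV2 ?posrE ?invr_gt0 //.
apply: lt_le_trans (truncnS_gt _) _; by rewrite ler_nat ltnS.
Qed.

Lemma rconv_subseq (a : nat -> R) l (g : nat -> nat) :
  (forall m, (g m < g m.+1)%N) -> rconv a l -> rconv (a \o g) l.
Proof.
move=> gS al e e0; have [N HN] := al e e0; exists N => n Nn /=.
by apply: HN; apply: leq_trans Nn (increasing_geq_id gS n).
Qed.

Lemma bounded_rconv_subseq (u : nat -> R) : (forall m, `|u m| <= 1) ->
  exists phi : nat -> nat, (forall m, (phi m < phi m.+1)%N) /\ exists l, rconv (u \o phi) l.
Proof.
move=> ub; have [|phi phiS /cvg_ex[l ul]] := bolzano_weierstrass (u_ := u).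
  by exists 1; split => // M M1 x _; apply: le_trans (ub x) (ltW M1).
exists phi; split.
  move=> m; rewrite ltnNge.
  by have -> : (phi m.+1 <= phi m)%N = (m.+1 <= m)%N := phiS m.+1 m; rewrite ltnn.
exists l => e e0.
have [N _ HN] := proj1 (@cvgrPdist_lt _ R^o _ _ _ _ _) ul e e0.
exists N => n Nn.
by rewrite distrC; apply: HN.
Qed.

Lemma bounded_rconv_subseqs K (u : nat -> nat -> R) :
  (forall m j, (j < K)%N -> `|u m j| <= 1) ->
  exists phi : nat -> nat, (forall m, (phi m < phi m.+1)%N) /\
  exists q : nat -> R, forall j, (j < K)%N -> rconv (fun m => u (phi m) j) (q j).
Proof.
elim: K => [|K IH] ub; first by exists id; split=> //; exists (fun _ => 0).
have [phi [phiS [q Hq]]] := IH (fun m j jK => ub m j (ltnW jK)).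
have [psi [psiS [l Hl]]] := bounded_rconv_subseq (fun m => ub (phi m) K (ltnSn K)).
exists (phi \o psi); split; first by move=> m; apply: (homo_ltn ltn_trans phiS).
exists (fun j => if j == K then l else q j) => j.
rewrite ltnS leq_eqVlt => /orP[/eqP ->|jK]; first by rewrite eqxx.
by rewrite ltn_eqF //; apply: (rconv_subseq psiS (Hq j jK)).
Qed.

(* The limit stays on the l1 unit sphere, so it is not zero. *)
Lemma l1_unit_rconv_subseq K (p : nat -> nat -> R) :
  (forall m, \sum_(j < K) `|p m j| = 1) ->
  exists phi : nat -> nat, (forall m, (phi m < phi m.+1)%N) /\
  exists2 q : nat -> R, (forall j, (j < K)%N -> rconv (fun m => p (phi m) j) (q j))
    & exists2 j, (j < K)%N & q j <> 0.
Proof.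
move=> p1.
have pb m j : (j < K)%N -> `|p m j| <= 1.
  move=> jK; rewrite -(p1 m) (bigD1 (Ordinal jK)) //= lerDl.
  by apply: sumr_ge0.
have [phi [phiS [q Hq]]] := bounded_rconv_subseqs pb.
exists phi; split=> //; exists q => //; apply: contrapT => qnz.
have q0 j : (j < K)%N -> q j = 0.
  by move=> jK; apply: contrapT => qj; apply: qnz; exists j.
pose e : R := (K%:R + 1)^-1.
have e0 : 0 < e by rewrite invr_gt0 ltr_wpDl.
have [N HN] := eventually_forall_ltn (fun j jK => Hq j jK e e0).
have : \sum_(j < K) `|p (phi N) j| <= \sum_(j < K) e.
  apply: ler_sum => j _; have := HN N (leqnn N) j (ltn_ord j).
  by rewrite q0 // subr0 => /ltW.
rewrite p1 sumr_const card_ord -mulr_natl ler_pdivlMr ?ltr_wpDl // mul1r.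
lra.
Qed.

Lemma expr_small (r : R) : 0 <= r < 1 ->
  forall e, 0 < e -> exists p, r ^+ p < e.
Proof.
move=> /andP[r0 r1] e e0; have rn1 : `|r| < 1 by rewrite ger0_norm.
have [N _ HN] := proj1 (@cvgrPdist_lt _ R^o _ _ _ _ _) (cvg_expr rn1) e e0.
by exists N; have := HN N (leqnn N); rewrite sub0r normrN ger0_norm // exprn_ge0.
Qed.

End RealSequences.

Section Span.
Variables (F : fieldType) (V : lmodType F).

Definition span_of k (b : nat -> V) (x : V) :=
  exists c : nat -> F, x = \sum_(i < k) c i *: b i.

Definition free_family k (b : nat -> V) := forall c : nat -> F,
  \sum_(i < k) c i *: b i = 0 -> forall i, (i < k)%N -> c i = 0.

Definition rcons_family k (b : nat -> V) (v : V) : nat -> V :=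
  fun i => if (i < k)%N then b i else v.

Lemma sum_rcons_family k b v (c : nat -> F) :
  \sum_(i < k.+1) c i *: rcons_family k b v i = \sum_(i < k) c i *: b i + c k *: v.
Proof.
rewrite big_ord_recr /rcons_family /= ltnn; congr (_ + _).
by apply: eq_bigr => i _; rewrite ltn_ord.
Qed.

Lemma span_of_family k b i : (i < k)%N -> span_of k b (b i).
Proof.
move=> ik; exists (fun j => (j == i)%:R).
rewrite (bigD1 (Ordinal ik)) //= eqxx scale1r big1 ?addr0 // => j /eqP ji.
by rewrite (_ : _ == i = false) ?scale0r //; apply/negbTE/eqP => h; apply/ji/val_inj.
Qed.

Lemma span_ofDZ k b x y (a : F) :
  span_of k b x -> span_of k b y -> span_of k b (x + a *: y).
Proof.
move=> [c ->] [c' ->]; exists (fun i => c i + a * c' i).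
rewrite scaler_sumr -big_split /=; apply: eq_bigr => i _.
by rewrite scalerDl scalerA.
Qed.

Lemma span_rcons_family k b v x : span_of k.+1 (rcons_family k b v) x <->
  exists y a, span_of k b y /\ x = y + a *: v.
Proof.
split=> [[c ->]|[y [a [[c ->] ->]]]].
  by rewrite sum_rcons_family; exists (\sum_(i < k) c i *: b i), (c k); split=> //; exists c.
pose c' i := if (i < k)%N then c i else a.
exists c'; rewrite sum_rcons_family /c' ltnn.
by congr (_ + _); apply: eq_bigr => i _; rewrite ltn_ord.
Qed.

Lemma span_of_rcons k (e : nat -> V) x :
  span_of k.+1 e x <-> span_of k.+1 (rcons_family k e (e k)) x.
Proof.
have E (c : nat -> F) : \sum_(i < k.+1) c i *: e i =
    \sum_(i < k.+1) c i *: rcons_family k e (e k) i.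
  apply: eq_bigr => i _; rewrite /rcons_family.
  by case: ltnP => // ki; have /eqP -> : nat_of_ord i == k by rewrite eqn_leq -ltnS ltn_ord.
by split=> -[c ->]; exists c; rewrite E.
Qed.

Lemma free_rcons_family k b v :
  free_family k b -> ~ span_of k b v -> free_family k.+1 (rcons_family k b v).
Proof.
move=> bfree vNspan c; rewrite sum_rcons_family => sum0.
have ck : c k = 0.
  apply: contrapT => /eqP ck; apply: vNspan; exists (fun i => - c i / c k).
  apply: (scalerI ck); rewrite scaler_sumr.
  have -> : c k *: v = - \sum_(i < k) c i *: b i.
    by apply/eqP; rewrite -addr_eq0 addrC sum0.
  rewrite -sumrN; apply: eq_bigr => i _.
  by rewrite scalerA mulrC divfK // scaleNr.
move: sum0; rewrite ck scale0r addr0 => /bfree cb i.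
by rewrite ltnS leq_eqVlt => /orP[/eqP ->|]; last exact: cb.
Qed.

Lemma span_of_free n (e : nat -> V) :
  exists k (b : nat -> V), free_family k b /\ forall x, span_of n e x <-> span_of k b x.
Proof.
elim: n => [|n [k [b [bfree spanE]]]].
  by exists 0%N, e; split=> // c _.
have [[c enb]|enNb] := EM (span_of k b (e n)).
  exists k, b; split=> // x; rewrite span_of_rcons span_rcons_family.
  split=> [[y [a [/spanE ys ->]]]|xb]; first by apply: span_ofDZ => //; exists c.
  by exists x, 0; rewrite scale0r addr0; split=> //; apply/spanE.
exists k.+1, (rcons_family k b (e n)); split; first exact: free_rcons_family.
move=> x; rewrite span_of_rcons !span_rcons_family.
by split=> -[y [a [/spanE ys ->]]]; exists y, a.
Qed.

End Span.

Section Subspace.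
Variables (R : realType) (V : lmodType R).

Lemma linear_subspaceB (S : set V) x y :
  linear_subspace S -> S x -> S y -> S (x - y).
Proof. by move=> [_ SD SZ] Sx Sy; rewrite -scaleN1r; apply: SD => //; apply: SZ. Qed.

Lemma linear_subspace_sum (S : set V) k (b : nat -> V) (c : nat -> R) :
  linear_subspace S -> (forall i, (i < k)%N -> S (b i)) ->
  S (\sum_(i < k) c i *: b i).
Proof.
move=> [S0 SD SZ] Sb; apply: (big_ind S) => // i _.
by apply: SZ; apply: Sb.
Qed.

Lemma finite_dimensional_free (S : set V) : finite_dimensional S ->
  exists k (b : nat -> V), free_family k b /\ forall x, S x <-> span_of k b x.
Proof.
move=> [n [e Se]].
pose e' j := if insub j is Some i then e i else 0.
have [k [b [bfree spanE]]] := span_of_free n e'.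
exists k, b; split=> // x; rewrite Se -spanE.
split=> -[c ->].
  exists (fun j => if insub j is Some i then c i else 0).
  by apply: eq_bigr => i _; rewrite /e' valK.
by exists (fun i => c i); apply: eq_bigr => i _; rewrite /e' valK.
Qed.

End Subspace.

Definition radius_above (R : realType) (V : lmodType R) (d : V -> V -> R)
    (U : set V) (eta : R) :=
  forall w, U w -> w <> 0 -> exists2 s, 0 < s & eta < d (s *: w) 0.

Section FSpace.
Variables (R : realType) (V : lmodType R) (d : V -> V -> R).
Hypotheses (dF : Fspace d) (dnd : nondecreasing_metric d).

Let dm : is_metric d. Proof. by case: dF. Qed.
Let dti : translation_invariant d. Proof. by case: dF. Qed.

Lemma fnormZ_small x e : 0 < e ->
  exists2 del, 0 < del & forall t, `|t| <= del -> d (t *: x) 0 < e.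
Proof.
case: dF => _ _ dZ _ e0.
have xx : dconv d (fun _ : nat => x) x.
  by case: dm => _ d0 _ _ e1 e1p; exists 0%N => n _; rewrite (proj2 (d0 x x)).
have [N HN] := dZ _ _ _ _ (@rconv_harmonic R) xx e e0.
exists N.+1%:R^-1; first by rewrite invr_gt0 ltr0n.
move=> t tN; apply: le_lt_trans (HN N (leqnn N)); rewrite scale0r.
by apply: fnormZ_le => //; rewrite [X in _ <= X]ger0_norm // invr_ge0 ler0n.
Qed.

Lemma dconv_lincomb K (f : nat -> V) (a : nat -> nat -> R) (q : nat -> R) :
  (forall j, (j < K)%N -> rconv (fun m => a m j) (q j)) ->
  dconv d (fun m => \sum_(j < K) a m j *: f j) (\sum_(j < K) q j *: f j).
Proof.
move=> aq e e0; pose e' := e / (K%:R + 1).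
have e'0 : 0 < e' by rewrite divr_gt0 // ltr_wpDl.
have ev j : (j < K)%N -> exists N, forall m, (N <= m)%N -> d ((a m j - q j) *: f j) 0 < e'.
  move=> jK; have [del del0 Hdel] := fnormZ_small (f j) e'0.
  have [N HN] := aq j jK del del0.
  by exists N => m Nm; apply/Hdel/ltW/HN.
have [N HN] := eventually_forall_ltn ev; exists N => m Nm.
rewrite dist_subr // -sumrB.
under eq_bigr do rewrite -scalerBl.
apply: le_lt_trans (fnorm_sum dm dti K (fun j => (a m j - q j) *: f j)) _.
apply: (@le_lt_trans _ _ (\sum_(j < K) e')).
  by apply: ler_sum => j _; apply/ltW/HN.
by rewrite sumr_const card_ord -mulr_natl mulrA ltr_pdivrMr ?ltr_wpDl //; nra.
Qed.

Section RadiusBound.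
Variables (U : set V) (eta : R).
Hypotheses (Ulin : linear_subspace U) (Urad : radius_above d U eta).

(* Normalising the coefficients to the l1 unit sphere and passing to a
   convergent subsequence yields a nonzero limit z of U.  Some multiple s z is
   far from 0, yet it is approximated by shrinkings of the short vectors, which
   are short by monotonicity of the metric. *)
Lemma fnorm_large_coef K (f : nat -> V) (g : nat -> nat -> R) :
  free_family K f -> (forall j, (j < K)%N -> U (f j)) ->
  (forall m, m.+1%:R <= \sum_(j < K) `|g m j|) ->
  exists m, eta <= d (\sum_(j < K) g m j *: f j) 0.
Proof.
move=> ffree Uf gbig; apply: contrapT => gsmall.
have {}gsmall m : d (\sum_(j < K) g m j *: f j) 0 < eta.
  by rewrite ltNge; apply/negP => ?; apply: gsmall; exists m.
pose N m := \sum_(j < K) `|g m j|.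
have N0 m : 0 < N m by apply: lt_le_trans (gbig m); rewrite ltr0n.
pose p m j := g m j / N m.
have p1 m : \sum_(j < K) `|p m j| = 1.
  under eq_bigr do rewrite normrM normfV (gtr0_norm (N0 m)).
  by rewrite -mulr_suml -/(N m) mulfV ?gt_eqF.
have [phi [phiS [q pq [j0 j0K qj0]]]] := l1_unit_rconv_subseq p1.
pose z := \sum_(j < K) q j *: f j.
have [s s0 sz] : exists2 s, 0 < s & eta < d (s *: z) 0.
  apply: Urad; first exact: (linear_subspace_sum q Ulin Uf).
  by move=> z0; apply/qj0/(ffree _ z0).
have sz0 : 0 < d (s *: z) 0 - eta by rewrite subr_gt0.
have [M HM] := dconv_lincomb (fun j => s *: f j) pq sz0.
pose m := maxn M (Num.truncn s).
pose w := \sum_(j < K) p (phi m) j *: f j.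
have close : d (s *: w) (s *: z) < d (s *: z) 0 - eta.
  have sZ (c : nat -> R) : s *: \sum_(j < K) c j *: f j = \sum_(j < K) c j *: (s *: f j).
    by rewrite scaler_sumr; apply: eq_bigr => j _; rewrite !scalerA mulrC.
  set D := d (s *: z) 0 - eta.
  by rewrite /w /z !sZ; apply: HM; apply: leq_maxl.
have short : d (s *: w) 0 < eta.
  have sN : s <= N (phi m).
    apply/ltW/(lt_le_trans (truncnS_gt s)); apply: le_trans (gbig _); rewrite ler_nat ltnS.
    by apply: leq_trans (leq_maxr _ _) (increasing_geq_id phiS m).
  apply: le_lt_trans (fnormZ_le dm dti dnd (b := N (phi m)) _ _) _.
    by rewrite !gtr0_norm.
  rewrite /w scaler_sumr.
  under eq_bigr do rewrite scalerA /p mulrC divfK ?gt_eqF //.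
  exact: gsmall.
case: dm => _ _ dC dtri; have := dtri (s *: z) (s *: w) 0; rewrite [d _ (s *: w)]dC.
by move: close short; lra.
Qed.

Variables (S : set V) (v : V).
Hypotheses (Slin : linear_subspace S) (Sfin : finite_dimensional S)
  (SU : S `<=` U) (Uv : U v) (Sv : ~ S v).

Lemma far_multiple : exists2 T, 0 < T & forall a, S a -> eta <= d (T *: v) a.
Proof.
have [k [b [bfree SE]]] := finite_dimensional_free Sfin.
have ffree : free_family k.+1 (rcons_family k b v).
  by apply: free_rcons_family => // /SE.
have Uf j : (j < k.+1)%N -> U (rcons_family k b v j).
  by rewrite /rcons_family; case: (ltnP j k) => // jk _; apply/SU/SE; apply: span_of_family.
apply: contrapT => nT.
have near_mult m : exists c : nat -> R, d (m.+1%:R *: v) (\sum_(i < k) c i *: b i) < eta.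
  apply: contrapT => nc; apply: nT; exists m.+1%:R => // a /SE[c ->].
  by rewrite leNgt; apply/negP => ?; apply: nc; exists c.
have [c Hc] := choice near_mult.
pose g m j := if (j < k)%N then - c m j else m.+1%:R.
have gbig m : m.+1%:R <= \sum_(j < k.+1) `|g m j|.
  rewrite big_ord_recr /= /g ltnn ger0_norm // lerDr.
  by apply: sumr_ge0.
have [m] := fnorm_large_coef ffree Uf gbig.
rewrite (sum_rcons_family k b v (g m)) {2}/g ltnn.
rewrite (_ : \sum_(i < k) g m i *: b i = - \sum_(i < k) c m i *: b i); last first.
  by rewrite -sumrN; apply: eq_bigr => i _; rewrite /g ltn_ord scaleNr.
by rewrite addrC -dist_subr // leNgt Hc.
Qed.

(* Walk along the multiples (j h) v with a step h so small that each step
   moves by less than th / 2: the first multiple at distance >= th from S,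
   minus a point of S close to the previous multiple, is the wanted y. *)
Lemma small_far_element th : 0 < th -> th < eta ->
  exists y, [/\ U y, d y 0 <= 2 * th & forall a, S a -> th <= d y a].
Proof.
move=> th0 the.
case: dm => _ d0 dC dtri.
have [T T0 farT] := far_multiple.
have [h h0 hsmall] := fnormZ_small v (divr_gt0 th0 (ltr0n _ 2)).
pose P j := forall a, S a -> th <= d ((j%:R * h) *: v) a.
have nP0 : ~ P 0%N.
  case: Slin => S0 _ _ /(_ 0 S0).
  by rewrite mul0r scale0r (proj2 (d0 0 0)) // leNgt th0.
have [J PJ] : exists J, P J.
  exists (Num.truncn (T / h)).+1 => a Sa.
  apply: (far_multiple_ge dm dti dnd (T := T) Slin) a Sa => [|b Sb].
    by rewrite T0 -ler_pdivrMr // ltW // truncnS_gt.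
  exact: le_trans (ltW the) (farT b Sb).
have [j [nPj Pj1]] := nat_switch nP0 PJ.
have [a [Sa ja]] : exists a, S a /\ d ((j%:R * h) *: v) a < th.
  apply: contrapT => nja; apply: nPj => a Sa; rewrite leNgt; apply/negP => ?.
  by apply: nja; exists a.
exists ((j.+1%:R * h) *: v - a); split.
- by apply: linear_subspaceB => //; [case: Ulin => _ _; apply | apply: SU].
- rewrite -dist_subr //.
  have step : d ((j.+1%:R * h) *: v) ((j%:R * h) *: v) < th / 2.
    rewrite dist_subr // -scalerBl -mulrBl -natrB // subSnn mul1r.
    by apply: hsmall; rewrite ger0_norm // ltW.
  by have := dtri ((j.+1%:R * h) *: v) ((j%:R * h) *: v) a; lra.
- move=> b Sb; rewrite dist_subr // -addrA -opprD -dist_subr //.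
  by apply: Pj1; case: Slin => _ SD _; apply: SD.
Qed.

End RadiusBound.
End FSpace.

Section Distance.
Variables (R : realType) (V : lmodType R) (d : V -> V -> R).

Lemma Edist_ge x (A : set V) th :
  (forall a, A a -> th <= d x a) -> (th%:E <= Edist d x A)%E.
Proof. by move=> far; apply/ereal_infP => _ [a Aa <-]; rewrite lee_fin far. Qed.

Lemma EX_ge x (A : set V) th :
  (forall a, A a -> th <= d x a) -> (th%:E <= EX d A)%E.
Proof.
move=> /Edist_ge far; apply: le_trans far _.
by apply: ereal_sup_ubound; exists x.
Qed.

Lemma satisfies_Shapiro_of_far (Xs : nat -> set V) (del : nat -> R) :
  (forall j, 0 < del j) ->
  (forall mm : nat -> nat, (forall j, (mm j < mm j.+1)%N) ->
     exists x, forall j a, Xs (mm j) a -> del j <= d x a) ->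
  satisfies_Shapiro d Xs.
Proof.
move=> del0 far eps eps0 _ eps_cvg.
have ev j : exists N, forall m, (N <= m)%N -> eps m < del j / j.+1%:R.
  have [N HN] := eps_cvg _ (divr_gt0 (del0 j) (ltr0n _ j.+1)).
  by exists N => m /HN; rewrite subr0 ger0_norm.
have [N HN] := choice ev.
have [mm [mmS mmN]] := exists_increasing_above N.
have [x farx] := far mm mmS.
exists x => -[C [M HM]].
pose j := maxn M (Num.truncn C).
have jM : (M <= mm j)%N := leq_trans (leq_maxl _ _) (increasing_geq_id mmS j).
have Cj : C <= j.+1%:R.
  by apply/ltW/(lt_le_trans (truncnS_gt C)); rewrite ler_nat ltnS leq_maxr.
have := le_trans (Edist_ge (farx j)) (HM _ jM); rewrite lee_fin => delC.
have := HN j _ (mmN j); rewrite ltr_pdivlMr // => epsj.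
by have := eps0 (mm j); nra.
Qed.

End Distance.

Section GeometricSteps.
Variables (R : realType) (V : lmodType R) (d : V -> V -> R).
Hypothesis dm : is_metric d.
Variables (S : nat -> V) (C r : R).
Hypotheses (r0 : 0 <= r) (S_step : forall q, d (S q.+1) (S q) <= C * r ^+ q).

Lemma dist_geometric_tail p q : r <= 1 -> (p <= q)%N ->
  (1 - r) * d (S q) (S p) <= C * r ^+ p.
Proof.
case: dm => dge0 d0 _ dtri r1 /subnKC <-.
have C0 : 0 <= C by have := S_step 0; rewrite expr0 mulr1; apply: le_trans.
have rp0 := exprn_ge0 p r0.
suff tail t : (1 - r) * d (S (p + t)%N) (S p) <= C * (r ^+ p - r ^+ (p + t)).
  by apply: le_trans (tail _) _; rewrite ler_wpM2l // lerBlDr lerDl exprn_ge0.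
elim: t => [|t IH]; first by rewrite addn0 (proj2 (d0 _ _)) // subrr !mulr0.
rewrite addnS; have := dtri (S (p + t).+1) (S (p + t)%N) (S p).
have := S_step (p + t)%N; rewrite exprSr.
move: IH (dge0 (S (p + t).+1) (S (p + t)%N)) (exprn_ge0 (p + t) r0).
move: (d _ (S p)) (d (S (p + t).+1) _) (d (S (p + t).+1) (S (p + t)%N)) (r ^+ (p + t)).
by move=> *; nra.
Qed.

Lemma dcauchy_geometric : r < 1 -> dcauchy d S.
Proof.
move=> r1 e e0; case: dm => _ _ dC dtri.
have e' : 0 < (1 - r) * e / (2 * (`|C| + 1)).
  by rewrite divr_gt0 ?mulr_gt0 ?subr_gt0 ?ltr_pwDr.
have r01 : 0 <= r < 1 by rewrite r0.
have [p rp] := expr_small r01 e'.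
exists p => m n pm pn.
have tail q : (p <= q)%N -> d (S q) (S p) < e / 2.
  move=> pq; have := dist_geometric_tail (ltW r1) pq.
  rewrite ltr_pdivlMr ?mulr_gt0 ?ltr_pwDr // in rp.
  have := exprn_ge0 p r0; have := ler_norm C.
  by move: (r ^+ p) (`|C|) (d _ _) rp => *; nra.
have := dtri (S m) (S p) (S n); rewrite [d (S p) _]dC.
by have := tail m pm; have := tail n pn; lra.
Qed.

End GeometricSteps.

Section FarSteps.
Variables (R : realType) (V : lmodType R) (d : V -> V -> R) (Xs : nat -> set V).
Hypotheses (dF : Fspace d) (Xlin : forall n, linear_subspace (Xs n))
  (Xmono : forall i j, (i <= j)%N -> Xs i `<=` Xs j).
Variable eta : R.
Hypotheses (eta0 : 0 < eta) (far_step : forall n th, 0 < th -> th < eta ->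
  exists y, [/\ Xs n.+1 y, d y 0 <= 2 * th & forall a, Xs n a -> th <= d y a]).

Let dm : is_metric d. Proof. by case: dF. Qed.
Let dti : translation_invariant d. Proof. by case: dF. Qed.
Let th j := eta / 2 * 8^-1 ^+ j.

Let th_gt0 j : 0 < th j.
Proof. by rewrite mulr_gt0 ?divr_gt0 ?exprn_gt0. Qed.

Let th_lt j : th j < eta.
Proof.
have r1 : 8^-1 ^+ j <= 1 :> R by rewrite exprn_ile1 // invf_le1 ?ler1n.
apply: le_lt_trans (ler_piMr _ r1) _; first by rewrite divr_ge0 ?ltW.
by rewrite gtr_pMr // invf_lt1 ?ltr1n.
Qed.

(* Add up far steps along the lacunary indices [mm j]; the j-th step is too
   large to be cancelled by the geometrically smaller later ones. *)
Lemma lacunary_far_series (mm : nat -> nat) : (forall j, (mm j < mm j.+1)%N) ->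
  exists x, forall j a, Xs (mm j) a -> th j / 2 <= d x a.
Proof.
move=> mmS; case: dF => -[dge0 _ dC dtri] _ _ dcomplete.
have [y Hy] := choice (fun j => far_step (mm j) (th_gt0 j) (th_lt j)).
pose S q := \sum_(j < q) y j.
have SX q : Xs (mm q) (S q).
  apply: (big_ind (Xs (mm q))) => [|u w|i _]; first by case: (Xlin (mm q)).
    by case: (Xlin (mm q)) => _ SD _; apply: SD.
  by case: (Hy i) => + _ _; apply: Xmono; apply: (homo_ltn ltn_trans mmS).
have S_step q : d (S q.+1) (S q) <= (2 * (eta / 2)) * 8^-1 ^+ q.
  by rewrite /S big_ord_recr /= dist_subr // addrAC subrr add0r -mulrA; case: (Hy q).
have r0 : 0 <= 8^-1 :> R by rewrite invr_ge0.
have r1 : 8^-1 < 1 :> R by rewrite invf_lt1 ?ltr1n.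
have [x Sx] := dcomplete _ (dcauchy_geometric dm r0 S_step r1).
exists x => j a Xa.
have far_j : th j <= d (S j.+1) a.
  rewrite /S big_ord_recr /= dist_subr // -/(S j).
  rewrite (_ : S j + y j - a = y j - (a - S j)); last by rewrite opprB addrCA addrA.
  by rewrite -dist_subr //; case: (Hy j) => _ _; apply; apply: linear_subspaceB.
have [q Hq] := Sx _ (divr_gt0 (th_gt0 j) (ltr0n _ 8)).
set q' := maxn q j.+1.
have tail := dist_geometric_tail dm r0 S_step (ltW r1) (leq_maxr q j.+1).
have := dtri (S j.+1) (S q') a; rewrite [d (S j.+1) (S q')]dC.
have := dtri (S q') x a; have := Hq q' (leq_maxl _ _).
have := th_gt0 j; move: far_j tail.
rewrite (_ : 2 * (eta / 2) * 8^-1 ^+ j.+1 = th j / 4); last by rewrite exprSr /th; field.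
by move: (th j) => *; lra.
Qed.

Lemma satisfies_Shapiro_of_far_steps : satisfies_Shapiro d Xs.
Proof.
apply: (satisfies_Shapiro_of_far (del := fun j => th j / 2)) => [j|mm mmS].
  by rewrite divr_gt0.
exact: lacunary_far_series.
Qed.

End FarSteps.

Lemma radius_above_of_gt0 (R : realType) (V : lmodType R) (d : V -> V -> R) (U : set V) :
  (0 < radius d U)%E -> exists2 eta, 0 < eta & radius_above d U eta.
Proof.
move=> rad0.
have [eta eta0 eta_rad] : exists2 eta : R, 0 < eta & (eta%:E < radius d U)%E.
  move: rad0; case: (radius d U) => [r r0| |//]; last by exists 1 => //; apply: ltry.
  by exists (r / 2); rewrite ?lte_fin; move: r0; rewrite lte_fin; lra.
exists eta => // w Uw w0.
have /ereal_sup_gt[_ [s s0 <-]] : (eta%:E < ereal_sup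
    [set (d (t *: w) 0)%:E | t in [set t : R | (0 < t)%R]])%E.
  by apply: lt_le_trans eta_rad _; apply: ereal_inf_lbound; exists w.
by rewrite lte_fin; exists s.
Qed.

Section ApproximationScheme.
Variables (R : realType) (V : lmodType R) (d : V -> V -> R) (Xs : nat -> set V).
Hypothesis Xs_scheme : approx_scheme d Xs.

Lemma approx_scheme_mono i j : (i <= j)%N -> Xs i `<=` Xs j.
Proof.
case: Xs_scheme => _ Xlt _ /subnKC <-; elim: (j - i)%N => [|m IH]; first by rewrite addn0.
by rewrite addnS => x /IH; apply: (properW (Xlt _)).
Qed.

Lemma approx_scheme_new n : exists2 v, Xs n.+1 v & ~ Xs n v.
Proof.
case: Xs_scheme => _ Xlt _; have [_ nsub] := Xlt n.
apply: contrapT => nv; apply: nsub => x Xx; apply: contrapT => nXx.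
by apply: nv; exists x.
Qed.

End ApproximationScheme.

Theorem mainTheorem3 (R : realType) (V : lmodType R) (d : V -> V -> R)
  (Xs : nat -> set V) :
  Fspace d -> nondecreasing_metric d ->
  approx_scheme d Xs ->
  (forall n, finite_dimensional (Xs n)) ->
  (0 < radius d (bigUnion Xs))%E ->
  (0 < ereal_inf [set EX d (Xs n) | n in [set: nat]])%E /\
  satisfies_Shapiro d Xs.
Proof.
move=> dF dnd Xs_scheme Xfin /radius_above_of_gt0[eta eta0 rad].
have Xlin n : linear_subspace (Xs n) by case: Xs_scheme.
have Xsub n : Xs n `<=` Xs n.+1 := approx_scheme_mono Xs_scheme (leqnSn n).
have far_step n th : 0 < th -> th < eta ->
    exists y, [/\ Xs n.+1 y, d y 0 <= 2 * th & forall a, Xs n a -> th <= d y a].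
  move=> th0 the.
  have [v Xv nXv] := approx_scheme_new Xs_scheme n.
  have rad_n : radius_above d (Xs n.+1) eta.
    by move=> w Xw; apply: rad; exists n.+1.
  by apply: (small_far_element dF dnd (Xlin n.+1) rad_n (Xlin n) (Xfin n) (Xsub n) Xv nXv
    th0 the).
split; last by apply: (satisfies_Shapiro_of_far_steps dF Xlin
  (approx_scheme_mono Xs_scheme) eta0 far_step).
apply: (@lt_le_trans _ _ (eta / 2)%:E); first by rewrite lte_fin divr_gt0.
apply/ereal_infP => _ [n _ <-].
have eta2 : eta / 2 < eta by rewrite gtr_pMr // invf_lt1 ?ltr1n.
have [y [_ _ far_y]] := far_step n _ (divr_gt0 eta0 (ltr0n _ 2)) eta2.
exact: EX_ge far_y.
Qed.
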